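(* Let $\mathcal{H}$ be a finite family of digraphs containing a directed path $P$ of length $p$. Let $D$ be a digraph containing no subgraph isomorphic to a graph in $\mathcal{H}^-_p$, and let $k$ be an integer. Then $(D,k)$ is a yes-instance of $\mathcal{H}$-SCC Deletion if and only if it is a yes-instance of $\{P\}$-SCC Deletion.
   Context: Subgraphs are not necessarily induced; strong components are maximal sets of mutually reachable vertices. For a family $\mathcal{F}$, $\mathcal{F}$-SCC Deletion asks, given $(D,k)$, whether some $X\subseteq V(D)$ with $|X|\le k$ is such that no strong component of $D-X$ contains a subgraph isomorphic to a graph in $\mathcal{F}$. For a digraph $H$, $GPC(H)$ is the set of strongly connected digraphs $H\cup P_1\cup\dots\cup P_\ell$ (union of vertex and arc sets) where each $P_i$ is a directed path with both end-points in $V(H)$ and the ordered end-point pairs of the $P_i$ are pairwise distinct; $\{P_1,\dots,P_\ell\}$ is a witnessing collection of paths. $GPC(\mathcal{H})=\bigcup_{H\in\mathcal{H}}GPC(H)$. $\mathcal{H}^-_p$ is the set of digraphs in $GPC(\mathcal{H})$ admitting a witnessing collection of paths all of length at most $p-1$. *)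

From Stdlib Require List.
From mathcomp Require Import all_boot all_order all_algebra.
Import Order.TTheory GRing.Theory Num.Theory.

Record digraph := Digraph {
  dv :> finType;
  da : rel dv;
  da_irr : irreflexive da }.

Definition embeds (F G : digraph) : Prop :=
  exists f : dv F -> dv G, injective f /\ (forall x y, da F x y -> da G (f x) (f y)).

Definition del_rel (D : digraph) (X : {set dv D}) : rel (dv D) :=
  fun x y => [&& x \notin X, y \notin X & da D x y].

Definition strong_comp (D : digraph) (X : {set dv D}) (C : {set dv D}) : Prop :=
  exists x : dv D, x \notin X /\
    C = [set y | [&& y \notin X, connect (del_rel D X) x y & connect (del_rel D X) y x]].

Definition embeds_in (D : digraph) (C : {set dv D}) (F : digraph) : Prop :=
  exists f : dv F -> dv D, injective f /\ (forall v, f v \in C) /\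
    (forall x y, da F x y -> da D (f x) (f y)).

Definition SCC_yes (fam : digraph -> Prop) (D : digraph) (k : int) : Prop :=
  exists X : {set dv D}, (#|X|%:Z <= k)%R /\
    forall (F : digraph) (C : {set dv D}), fam F -> strong_comp D X C -> ~ embeds_in D C F.

Definition strongly_connected (G : digraph) : Prop :=
  forall x y : dv G, connect (da G) x y.

(* (x, s) is a directed path x -> s_1 -> ... -> s_n in G (vertices distinct); its
   length is size s, its end-points are x and last x s. *)
Definition dipath_in (G : digraph) (x : dv G) (s : seq (dv G)) : bool :=
  path (da G) x s && uniq (x :: s).

(* G belongs to GPC(H) with a witnessing collection of paths all of length <= p-1
   (i.e. < p), H being embedded into G via phi. *)
Definition in_GPC_short (H : digraph) (p : nat) (G : digraph) : Prop :=
  exists (phi : dv H -> dv G) (Ps : seq (dv G * seq (dv G))),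
    injective phi /\
    (forall a b, da H a b -> da G (phi a) (phi b)) /\
    (forall P, P \in Ps ->
       [/\ dipath_in G P.1 P.2, P.1 \in codom phi, last P.1 P.2 \in codom phi
         & size P.2 < p]) /\
    uniq [seq (P.1, last P.1 P.2) | P <- Ps] /\
    (forall v : dv G, v \in codom phi \/ exists2 P, P \in Ps & v \in P.1 :: P.2) /\
    (forall u v : dv G, da G u v ->
       (exists a b, [/\ phi a = u, phi b = v & da H a b])
       \/ exists2 P, P \in Ps & (u, v) \in zip (P.1 :: P.2) P.2) /\
    strongly_connected G.

Definition in_Hminus (Hs : seq digraph) (p : nat) (G : digraph) : Prop :=
  exists H, List.In H Hs /\ in_GPC_short H p G.

Definition is_dipath (P : digraph) (p : nat) : Prop :=
  exists s : seq (dv P), [/\ uniq s, size s = p.+1, (forall v, v \in s) &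
    forall u v, da P u v = ((u, v) \in zip s (behead s))].

(* If X is a solution for {P} but some H in Hs embeds, via f, into a strong
   component C of D - X, then any two vertices f a, f b are joined by a
   directed path inside C; such a path has fewer than p arcs, since otherwise
   it would contain a copy of P in C.  The image of H together with these
   routes is strongly connected and lies in H^-_p, yet it is a subgraph of D:
   a contradiction.  The converse direction holds because P belongs to Hs. *)

From mathcomp Require Import all_boot all_order all_algebra.
From Stdlib Require List.
From Stdlib Require Import Lia.
From mathcomp Require Import zify.

Set Implicit Arguments.
Unset Strict Implicit.
Unset Printing Implicit Defensive.

Lemma path_zipE (T : eqType) (e : rel T) x s :
  path e x s = all [pred uv | e uv.1 uv.2] (zip (x :: s) s).
Proof. by elim: s x => //= y s IH x; rewrite IH. Qed.

Lemma path_connect_last (T : finType) (e : rel T) x s v :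
  path e x s -> v \in x :: s -> connect e v (last x s).
Proof.
move=> e_s v_in; case/splitPl: s / v_in e_s => s1 s2 <-.
by rewrite cat_path last_cat => /andP[_ e_s2]; apply/connectP; exists s2.
Qed.

Lemma pmap_insubK (T : eqType) (P : pred T) (sT : subEqType P) (s : seq T) :
  all P s -> map val (pmap (insub : T -> option sT) s) = s.
Proof.
by move=> /all_filterP P_s; rewrite (pmap_filter (insubK _)) (eq_filter (isSome_insub _)).
Qed.

Lemma zip_map2 (S T : Type) (f : S -> T) (s t : seq S) :
  zip (map f s) (map f t) = map (fun xy => (f xy.1, f xy.2)) (zip s t).
Proof. by elim: s t => [|x s IH] [|y t] //=; rewrite IH. Qed.

Lemma mem_zip_behead (T : eqType) (s : seq T) u v :
  (u, v) \in zip s (behead s) ->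
  exists2 i, i.+1 < size s & u = nth u s i /\ v = nth u s i.+1.
Proof.
case/(nthP (u, v)) => i; rewrite size_zip size_behead => i_lt.
have i1_lt : i.+1 < size s by lia.
rewrite nth_zip_cond size_zip size_behead i_lt /= nth_behead => -[<- <-].
by exists i => //; split; apply: set_nth_default; lia.
Qed.

Lemma dipath_embeds_in (D P : digraph) p (C : {set D}) x s :
  is_dipath P p -> dipath_in D x s -> {subset x :: s <= C} -> p <= size s ->
  embeds_in D C P.
Proof.
case=> sP [uniq_sP size_sP sP_all arcP] /andP[D_xs uniq_xs] xs_C p_le.
pose g u := nth x (x :: s) (index u sP).
have index_lt u : index u sP < size (x :: s).
  by rewrite /= ltnS (leq_trans _ p_le) // -ltnS -size_sP index_mem.
exists g; split; [|split].
- move=> u v /eqP; rewrite /g nth_uniq // => /eqP /(congr1 (nth u sP)).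
  by rewrite !nth_index.
- by move=> u; apply/xs_C/mem_nth.
- move=> u v; rewrite arcP => /mem_zip_behead[i i_lt [-> ->]].
  rewrite /g !index_uniq ?(ltnW i_lt) //.
  by apply: (pathP x D_xs); rewrite -ltnS (leq_trans i_lt) // size_sP ltnS.
Qed.

Lemma connect_del_notin (D : digraph) (X : {set D}) x y :
  connect (del_rel D X) x y -> x \notin X -> y \notin X.
Proof.
case/connectP=> s + ->; elim: s x => [|z s IH] x //= /andP[/and3P[_ z_X _] /IH].
by move/(_ z_X).
Qed.

Section StrongComponent.

Variables (D : digraph) (X C : {set D}).
Hypothesis C_comp : strong_comp D X C.
Local Notation reach := (connect (del_rel D X)).

Lemma strong_comp_connect u v : u \in C -> v \in C -> reach u v.
Proof.
case: C_comp => x [_ ->]; rewrite !inE => /and3P[_ _ u_x] /and3P[_ x_v _].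
exact: connect_trans u_x x_v.
Qed.

Lemma strong_comp_between u v w :
  u \in C -> w \in C -> reach u v -> reach v w -> v \in C.
Proof.
case: C_comp => x [x_X ->]; rewrite !inE => /and3P[_ x_u _] /and3P[_ _ w_x] u_v v_w.
have x_v := connect_trans x_u u_v.
by rewrite (connect_del_notin x_v) // x_v (connect_trans v_w w_x).
Qed.

Lemma strong_comp_short_dipath (P : digraph) p u v :
  is_dipath P p -> ~ embeds_in D C P -> u \in C -> v \in C ->
  exists s, [/\ dipath_in D u s, last u s = v & size s < p].
Proof.
move=> P_dipath no_P u_C v_C.
case/connectP: (strong_comp_connect u_C v_C) => s0 X_s0 v_last.
case/shortenP: X_s0 v_last => s X_s uniq_s _ v_last.
have s_C : {subset u :: s <= C}.
  move=> w w_s; apply: (strong_comp_between u_C v_C).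
    exact: path_connect X_s _ w_s.
  by rewrite v_last; apply: path_connect_last X_s w_s.
have D_s : dipath_in D u s.
  by rewrite /dipath_in uniq_s andbT (sub_path _ X_s) // => x y /and3P[].
exists s; split=> //; rewrite ltnNge; apply/negP => p_le.
exact/no_P/(dipath_embeds_in P_dipath D_s s_C).
Qed.

End StrongComponent.

Section SubDigraph.

Variables (D : digraph) (V : {set D}) (e : rel D).
Hypothesis e_sub : subrel e (da D).

Lemma sub_digraph_irr : irreflexive (fun x y : {v | v \in V} => e (val x) (val y)).
Proof. by move=> x; apply/negP => /e_sub; rewrite da_irr. Qed.

Definition sub_digraph : digraph := Digraph _ _ sub_digraph_irr.

Lemma sub_digraph_embeds : embeds sub_digraph D.
Proof. by exists val; split=> [|x y /e_sub]; [exact: val_inj|]. Qed.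

End SubDigraph.

Section RouteUnion.

Variables (D H : digraph) (p : nat) (f : H -> D) (route : H -> H -> seq D).
Hypothesis f_inj : injective f.
Hypothesis f_arc : forall a b, da H a b -> da D (f a) (f b).
Hypothesis route_dipath : forall a b, dipath_in D (f a) (route a b).
Hypothesis route_last : forall a b, last (f a) (route a b) = f b.
Hypothesis route_short : forall a b, size (route a b) < p.

Definition route_verts : {set D} :=
  [set v | [exists a, exists b, v \in f a :: route a b]].

Definition route_arc : rel D := fun u v => [exists a, exists b,
  [&& da H a b, f a == u & f b == v] || ((u, v) \in zip (f a :: route a b) (route a b))].

Lemma route_arc_sub : subrel route_arc (da D).
Proof.
move=> u v /existsP[a /existsP[b /orP[/and3P[ab /eqP<- /eqP<-]|uv]]].
  exact: f_arc.
by case/andP: (route_dipath a b); rewrite path_zipE => /allP/(_ _ uv).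
Qed.

Definition route_union : digraph := sub_digraph route_verts route_arc_sub.
Local Notation G := route_union.

Lemma route_verts_route a b : {subset f a :: route a b <= route_verts}.
Proof.
by move=> v v_ab; rewrite inE; apply/existsP; exists a; apply/existsP; exists b.
Qed.

Definition hub a : G := exist _ (f a) (route_verts_route (b := a) (mem_head _ _)).

Lemma hub_inj : injective hub.
Proof. by move=> a b /(congr1 val) /f_inj. Qed.

Definition lift_route a b : seq G := pmap insub (route a b).

Lemma lift_routeK a b : map val (lift_route a b) = route a b.
Proof.
apply/pmap_insubK/allP => v v_ab.
by apply: (route_verts_route (a := a) (b := b)); rewrite inE v_ab orbT.
Qed.

Lemma hub_lift_routeK a b : map val (hub a :: lift_route a b) = f a :: route a b.
Proof. by rewrite /= lift_routeK. Qed.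

Lemma last_lift_route a b : last (hub a) (lift_route a b) = hub b.
Proof. by apply: val_inj; rewrite -last_map lift_routeK; apply: route_last. Qed.

Lemma lift_route_dipath a b : dipath_in G (hub a) (lift_route a b).
Proof.
rewrite /dipath_in -(map_inj_uniq val_inj) hub_lift_routeK.
case/andP: (route_dipath a b) => _ ->; rewrite andbT.
have : path route_arc (f a) (route a b).
  rewrite path_zipE; apply/allP => -[u v] uv; apply/existsP; exists a.
  by apply/existsP; exists b; rewrite uv orbT.
by rewrite -[f a]/(val (hub a)) -lift_routeK path_map.
Qed.

Lemma hub_connect a b : connect (da G) (hub a) (hub b).
Proof.
apply/connectP; exists (lift_route a b); last by rewrite last_lift_route.
by case/andP: (lift_route_dipath a b).
Qed.

Lemma route_union_cover v : exists a b, v \in hub a :: lift_route a b.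
Proof.
have := valP v; rewrite inE => /existsP[a /existsP[b]].
by rewrite -hub_lift_routeK mem_map //; [exists a, b | exact: val_inj].
Qed.

Lemma route_union_arc u v : da G u v ->
  (exists a b, [/\ hub a = u, hub b = v & da H a b]) \/
  exists a b, (u, v) \in zip (hub a :: lift_route a b) (lift_route a b).
Proof.
case/existsP=> a /existsP[b /orP[/and3P[ab /eqP fa /eqP fb]|uv]].
  by left; exists a, b; split=> //; apply: val_inj.
right; exists a, b; move: uv.
rewrite -hub_lift_routeK -lift_routeK zip_map2.
by case/mapP=> -[x y] xy_ab [/val_inj-> /val_inj->].
Qed.

Lemma route_union_strong : strongly_connected G.
Proof.
move=> x y; have [a [b x_ab]] := route_union_cover x.
have [c [d y_cd]] := route_union_cover y.
case/andP: (lift_route_dipath a b) => G_ab _.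
case/andP: (lift_route_dipath c d) => G_cd _.
apply: connect_trans (connect_trans _ (hub_connect b c)) _.
  by rewrite -(last_lift_route a b); apply: path_connect_last G_ab x_ab.
exact: path_connect G_cd _ y_cd.
Qed.

(* The empty routes [route a a] are included too; they are harmless, as the
   end-point pairs [(hub a, hub b)] remain pairwise distinct. *)
Definition route_paths : seq (G * seq G) :=
  codom (fun ab : H * H => (hub ab.1, lift_route ab.1 ab.2)).

Lemma route_paths_lift a b : (hub a, lift_route a b) \in route_paths.
Proof. exact: (codom_f _ (a, b)). Qed.

Lemma route_union_GPC : in_GPC_short H p G.
Proof.
exists hub, route_paths.
split; [exact: hub_inj | split; [|split; [|split; [|split; [|split]]]]].
- move=> a b ab; apply/existsP; exists a; apply/existsP; exists b.
  by rewrite ab !eqxx.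
- move=> _ /codomP[[a b] ->] /=; rewrite last_lift_route !codom_f.
  by rewrite -(size_map val) lift_routeK lift_route_dipath.
- rewrite /route_paths codomE -map_comp map_inj_uniq ?enum_uniq // => -[a b] [c d].
  by rewrite /= !last_lift_route => -[/f_inj-> /f_inj->].
- move=> v; right; have [a [b v_ab]] := route_union_cover v.
  by exists (hub a, lift_route a b); first exact: route_paths_lift.
- move=> u v /route_union_arc[|[a [b uv]]]; first by left.
  by right; exists (hub a, lift_route a b); first exact: route_paths_lift.
- exact: route_union_strong.
Qed.

End RouteUnion.

Theorem lemma26 (Hs : seq digraph) (P : digraph) (p : nat) (D : digraph) (k : int) :
  List.In P Hs -> is_dipath P p ->
  (forall G : digraph, in_Hminus Hs p G -> ~ embeds G D) ->
  (SCC_yes (fun F => List.In F Hs) D k <-> SCC_yes (fun F => F = P) D k).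
Proof.
move=> P_Hs P_dipath no_short_GPC; split.
  by case=> X [X_k X_Hs]; exists X; split=> // F C ->; apply: X_Hs.
case=> X [X_k X_P]; exists X; split=> // H C H_Hs C_comp [f [f_inj [f_C f_arc]]].
have no_P := X_P P C erefl C_comp.
have /fin_all_exists[route route_spec] : forall a, exists r : H -> seq D,
    forall b, [/\ dipath_in D (f a) (r b), last (f a) (r b) = f b & size (r b) < p].
  move=> a; exact: fin_all_exists (fun b =>
    strong_comp_short_dipath C_comp P_dipath no_P (f_C a) (f_C b)).
have route_dipath a b : dipath_in D (f a) (route a b) by case: (route_spec a b).
have route_last a b : last (f a) (route a b) = f b by case: (route_spec a b).
have route_short a b : size (route a b) < p by case: (route_spec a b).
apply: (no_short_GPC (route_union f_arc route_dipath)); last exact: sub_digraph_embeds.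
by exists H; split; last exact: route_union_GPC.
Qed.
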